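(* Let $k$ be a field, $Q$ a finite connected quiver without oriented cycles with vertex set $Q_0$ and arrow set $Q_1$, let $m\geq 2$, and let $\Lambda=kQ/F^m$ be the $m$-truncated path algebra. Then $$\dim_k H^1(\Lambda,\Lambda)=1-|Q_0|+|Q_1/\!/B|,$$ where $B$ is the set of paths of $Q$ of length strictly less than $m$ (including vertices) and $Q_1/\!/B=\{(a,\varepsilon)\in Q_1\times B\mid s(\varepsilon)=s(a),\ t(\varepsilon)=t(a)\}$.
   Context: $kQ$ is the path algebra of $Q$; $F$ is the two-sided ideal generated by the arrows, so $F^m$ is the ideal generated by all paths of length $m$. $H^1(\Lambda,\Lambda)$ is the first Hochschild cohomology of $\Lambda$ (derivations modulo inner derivations). $s$ and $t$ denote source and target of arrows and paths. *)

From HB Require Import structures.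
From mathcomp Require Import all_boot all_order all_algebra.
Set Implicit Arguments. Unset Strict Implicit. Unset Printing Implicit Defensive.
Import GRing.Theory.
Local Open Scope ring_scope.

(* A quiver Q = (V, A, s, t): vertex finType V, arrow finType A,
   source map s and target map t. *)

Definition composable (V A : finType) (s t : A -> V) : rel A :=
  fun a b => t a == s b.

(* A path is a pair (v, w): v is its source vertex and w its word of arrows.
   (v, [::]) is the trivial path e_v; (v, a :: w') is a nonempty path
   whose first arrow a starts at v and whose arrows are composable. *)
Definition is_path (V A : finType) (s t : A -> V) (v : V) (w : seq A) : bool :=
  match w with
  | [::] => true
  | a :: w' => (s a == v) && path (composable s t) a w'
  end.

Definition path_src (V A : finType) (s t : A -> V) (v : V) (w : seq A) : V := v.
Definition path_tgt (V A : finType) (s t : A -> V) (v : V) (w : seq A) : V :=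
  match w with [::] => v | a :: w' => t (last a w') end.

Definition acyclic (V A : finType) (s t : A -> V) : Prop :=
  forall (a : A) (w : seq A), path (composable s t) a w -> t (last a w) != s a.

(* Q is connected: its underlying undirected graph is connected (and Q is
   nonempty, which is required separately). *)
Definition qconnected (V A : finType) (s t : A -> V) : Prop :=
  forall u v : V,
    connect (fun x y => [exists a : A, ((s a == x) && (t a == y))
                                     || ((s a == y) && (t a == x))]) u v.

Definition rawpath (V A : finType) (m : nat) : finType :=
  (V * {i : 'I_m & i.-tuple A})%type.

Definition raw_word (V A : finType) (m : nat) (x : rawpath V A m) : seq A :=
  tagged x.2.

Definition Bpaths (V A : finType) (s t : A -> V) (m : nat) : finType :=
  {x : rawpath V A m | is_path s t x.1 (raw_word x)}.

Section Truncated.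
Variables (V A : finType) (s t : A -> V) (m : nat).

Definition bsrc (p : Bpaths s t m) : V := (val p).1.
Definition bword (p : Bpaths s t m) : seq A := raw_word (val p).
Definition btgt (p : Bpaths s t m) : V := path_tgt s t (bsrc p) (bword p).

Definition iscat (p q r : Bpaths s t m) : bool :=
  [&& btgt p == bsrc q, bsrc r == bsrc p & bword r == bword p ++ bword q].

Definition nB := #|Bpaths s t m|.

(* The m-truncated path algebra Lambda = kQ/F^m, realised on its basis B:
   elements are row vectors of coordinates w.r.t. B, and the product of two
   basis paths is their concatenation if it is a path of length < m, else 0. *)
Variable k : fieldType.

Definition Lam := 'rV[k]_nB.

Definition lmul (x y : Lam) : Lam :=
  \row_r \sum_(i < nB) \sum_(j < nB)
     (x 0 i * y 0 j) *+ iscat (enum_val i) (enum_val j) (enum_val r).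

Definition bvec (i : 'I_nB) : Lam := delta_mx 0 i.

(* k-linear endomorphisms of Lambda are matrices D acting by x |-> x *m D. *)
Definition der_defect (D : 'M[k]_nB) : {ffun 'I_nB * 'I_nB -> Lam} :=
  [ffun ij => lmul (bvec ij.1) (bvec ij.2) *m D
              - lmul (bvec ij.1 *m D) (bvec ij.2)
              - lmul (bvec ij.1) (bvec ij.2 *m D)].

Definition Der : {vspace 'M[k]_nB} := lker (linfun der_defect).

Definition ad (a : Lam) : 'M[k]_nB :=
  \matrix_i (lmul a (bvec i) - lmul (bvec i) a).

Definition Inn : {vspace 'M[k]_nB} := limg (linfun ad).

Definition HH1dim : int := (\dim Der)%:Z - (\dim Inn)%:Z.

Definition Q1B : {set A * Bpaths s t m} :=
  [set x | (bsrc x.2 == s x.1) && (btgt x.2 == t x.1)].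

End Truncated.

From Pilot Require Import Defs.
From HB Require Import structures.
From mathcomp Require Import all_boot all_order all_algebra zify.
Set Implicit Arguments. Unset Strict Implicit. Unset Printing Implicit Defensive.
Import GRing.Theory.
Local Open Scope ring_scope.

(* Correcting a derivation D by the inner derivation [sum_v D(e_v) e_v, -]
   makes it vanish on the vertex idempotents, so Der = Der0 + Inn, where Der0
   is the space of such normalized derivations.  A normalized derivation is
   determined by its values on arrows, and D(a) = e_(s a) D(a) e_(t a) lies in
   the span of the paths of B parallel to a.  Conversely, for (a, eps) in
   Q1//B, substituting eps for one occurrence of a at a time defines a
   normalized derivation: eps is not trivial since Q has no loops, so the
   substitution never shortens a path and is compatible with truncation.
   Hence dim Der0 = |Q1//B|.  Finally Der0 :&: Inn consists of the
   [sum_v c_v e_v, -] (acyclicity gives e_v Lambda e_v = k e_v), and since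
   m >= 2 and Q is connected such a derivation vanishes iff c is constant;
   so dim (Der0 :&: Inn) = |Q0| - 1. *)

Lemma subrDDD (M : zmodType) (x1 y1 x2 y2 x3 y3 : M) :
  (x1 + y1) - (x2 + y2) - (x3 + y3) = (x1 - x2 - x3) + (y1 - y2 - y3).
Proof. by rewrite !opprD (addrACA x1) (addrACA (x1 - x2)). Qed.

(** * Words and paths *)

Section Splice.
Variables (T : Type) (e : seq T).

Definition splice (j : nat) (w : seq T) : seq T := take j w ++ e ++ drop j.+1 w.

Lemma splice_catl j w1 w2 : (j < size w1)%N -> splice j (w1 ++ w2) = splice j w1 ++ w2.
Proof.
move=> hj; rewrite /splice take_cat hj drop_cat -!catA; case: ltnP => // hj'.
have -> : j.+1 = size w1 by apply/eqP; rewrite eqn_leq hj hj'.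
by rewrite subnn drop0 drop_size.
Qed.

Lemma splice_catr j w1 w2 : splice (size w1 + j) (w1 ++ w2) = w1 ++ splice j w2.
Proof.
rewrite /splice take_cat drop_cat !ifF; try lia.
by rewrite -addnS !addKn -catA.
Qed.

Lemma size_splice j w : (j < size w)%N -> (size (splice j w)).+1 = size w + size e.
Proof. by move=> hj; rewrite /splice !size_cat size_take size_drop hj; lia. Qed.

End Splice.

Section QuiverPaths.
Variables (V A : finType) (s t : A -> V).
Local Notation ptgt := (path_tgt s t).
Local Notation ispath := (is_path s t).

Lemma path_tgt_cat v w1 w2 : ptgt v (w1 ++ w2) = ptgt (ptgt v w1) w2.
Proof.
case: w1 => [|a w1] //=; case: w2 => [|b w2] /=; first by rewrite cats0.
by rewrite last_cat.
Qed.

Lemma is_path_cat v w1 w2 :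
  ispath v (w1 ++ w2) = ispath v w1 && ispath (ptgt v w1) w2.
Proof.
case: w1 => [|a w1] //=; rewrite cat_path -andbA; congr (_ && (_ && _)).
by case: w2 => [|b w2] //=; rewrite /composable eq_sym.
Qed.

Lemma acyclic_closed_path_nil : acyclic s t ->
  forall v w, ispath v w -> ptgt v w = v -> w = [::].
Proof.
move=> hacyc v [//|a w] /= /andP[/eqP hs hp] ht.
by have := hacyc _ _ hp; rewrite ht hs eqxx.
Qed.

Lemma qconnected_const (T : eqType) (f : V -> T) : qconnected s t ->
  (forall a, f (s a) = f (t a)) -> forall u v, f u = f v.
Proof.
move=> hconn h u v.
have hcl : closed (fun x y => [exists a : A, ((s a == x) && (t a == y))
                                         || ((s a == y) && (t a == x))])
                  [pred x | f x == f u].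
  by move=> x y /existsP[a /orP[] /andP[/eqP <- /eqP <-]]; rewrite !inE h.
by have := closed_connect hcl (hconn u v); rewrite !inE eqxx => /esym/eqP.
Qed.

Section Truncation.
Variable m : nat.
Local Notation P := (Bpaths s t m).

Definition inB v w := ispath v w && (size w < m)%N.

Lemma inB_bsrc_bword (p : P) : inB (bsrc p) (bword p).
Proof.
case: p => [[v [i tu]] hp]; rewrite /inB /bword /raw_word /= size_tuple hp.
exact: ltn_ord.
Qed.

Lemma bpath_is_path (p : P) : ispath (bsrc p) (bword p).
Proof. by case/andP: (inB_bsrc_bword p). Qed.

Lemma bpath_inj (p q : P) : bsrc p = bsrc q -> bword p = bword q -> p = q.
Proof.
case: p => [[v [i tu]] hp]; case: q => [[v' [j tu']] hq].
rewrite /bsrc /bword /raw_word /= => ev ew; subst v'.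
have eij : i = j by apply: val_inj; rewrite /= -(size_tuple tu) ew size_tuple.
subst j; have etu : tu = tu' by apply: val_inj.
by subst tu'; apply: val_inj.
Qed.

Lemma inB_bpath v w : inB v w -> {p : P | bsrc p = v /\ bword p = w}.
Proof.
case/andP=> hp hs.
pose tw : (Ordinal hs).-tuple A := in_tuple w.
by exists (Sub (v, Tagged (fun i : 'I_m => i.-tuple A) tw) hp).
Qed.

Lemma inB_catl v w1 w2 : inB v (w1 ++ w2) -> inB v w1.
Proof.
rewrite /inB is_path_cat size_cat => /andP[/andP[-> _]].
exact: leq_ltn_trans (leq_addr _ _).
Qed.

Lemma inB_catr v w1 w2 : inB v (w1 ++ w2) -> inB (ptgt v w1) w2.
Proof.
rewrite /inB is_path_cat size_cat => /andP[/andP[_ ->]].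
exact: leq_ltn_trans (leq_addl _ _).
Qed.

Lemma Q1B_word_neq_nil : acyclic s t -> forall x, x \in Q1B s t m -> bword x.2 != [::].
Proof.
move=> hacyc [a p]; rewrite inE /= => /andP[/eqP hs /eqP ht]; apply/eqP => hw.
by have := hacyc a [::] isT; rewrite /= -ht -hs /btgt hw eqxx.
Qed.

Lemma Q1B_last_tgt x : x \in Q1B s t m -> t (last x.1 (bword x.2)) = t x.1.
Proof.
by case: x => a p; rewrite inE /= /btgt => /andP[_]; case: (bword p) => //= b w /eqP.
Qed.

Section Algebra.
Variable k : fieldType.
Local Notation N := (nB s t m).
Local Notation L := (Lam s t m k).
Local Notation bvec := (@bvec V A s t m k).

(** * The truncated path algebra on its path basis *)

(* 0 when (v, w) is not in B: this junk value lets the product rule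
   lmul_pvec hold for all words. *)
Definition pvec v w : L :=
  \row_r ((bsrc (enum_val r) == v) && (bword (enum_val r) == w))%:R.

Local Notation evec p := (pvec (bsrc p) (bword p)).

Lemma pvec_coord v w (p : P) :
  pvec v w 0 (enum_rank p) = ((bsrc p == v) && (bword p == w))%:R.
Proof. by rewrite mxE enum_rankK. Qed.

Lemma bpath_coord (p q : P) : evec p 0 (enum_rank q) = (p == q)%:R.
Proof.
rewrite pvec_coord; congr (nat_of_bool _)%:R.
by apply/andP/eqP => [[/eqP e1 /eqP e2]|->]; [rewrite (bpath_inj e1 e2)|rewrite !eqxx].
Qed.

Lemma pvec_bpath (p : P) : evec p = bvec (enum_rank p).
Proof.
apply/rowP => r; rewrite /Defs.bvec !mxE; congr (nat_of_bool _)%:R.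
apply/idP/eqP => [/andP[/eqP e1 /eqP e2]|->]; last by rewrite enum_rankK !eqxx.
by rewrite -[r]enum_valK (bpath_inj e1 e2).
Qed.

Lemma bvecE i : bvec i = evec (enum_val i).
Proof. by rewrite pvec_bpath enum_valK. Qed.

Lemma pvec_notB v w : ~~ inB v w -> pvec v w = 0.
Proof.
move=> hvw; apply/rowP => r; rewrite !mxE.
case: eqP => [ev|//]; case: eqP => [ew|//].
by rewrite -ev -ew inB_bsrc_bword in hvw.
Qed.

Lemma bpath_neq0 (p : P) : evec p != 0.
Proof.
by apply/eqP => /rowP/(_ (enum_rank p)); rewrite bpath_coord eqxx mxE; apply/eqP/oner_neq0.
Qed.

Lemma mul_bpath (p : P) (M : 'M[k]_N) : evec p *m M = row (enum_rank p) M.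
Proof. by rewrite pvec_bpath /Defs.bvec rowE. Qed.

Lemma lmulDl x1 x2 y : lmul (x1 + x2) y = lmul x1 y + lmul x2 y :> L.
Proof.
apply/rowP => r; rewrite !mxE -big_split; apply: eq_bigr => i _ /=.
by rewrite -big_split; apply: eq_bigr => j _ /=; rewrite !mxE mulrDl mulrnDl.
Qed.

Lemma lmulDr x y1 y2 : lmul x (y1 + y2) = lmul x y1 + lmul x y2 :> L.
Proof.
apply/rowP => r; rewrite !mxE -big_split; apply: eq_bigr => i _ /=.
by rewrite -big_split; apply: eq_bigr => j _ /=; rewrite !mxE mulrDr mulrnDl.
Qed.

Lemma lmulZl a x y : lmul (a *: x) y = a *: lmul x y :> L.
Proof.
apply/rowP => r; rewrite !mxE mulr_sumr; apply: eq_bigr => i _ /=.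
by rewrite mulr_sumr; apply: eq_bigr => j _ /=; rewrite !mxE -mulrA mulrnAr.
Qed.

Lemma lmulZr a x y : lmul x (a *: y) = a *: lmul x y :> L.
Proof.
apply/rowP => r; rewrite !mxE mulr_sumr; apply: eq_bigr => i _ /=.
by rewrite mulr_sumr; apply: eq_bigr => j _ /=; rewrite !mxE mulrCA mulrnAr.
Qed.

Lemma lmul0l y : lmul 0 y = 0 :> L.
Proof. by rewrite -[X in lmul X _](scale0r (0 : L)) lmulZl scale0r. Qed.

Lemma lmul0r x : lmul x 0 = 0 :> L.
Proof. by rewrite -[X in lmul _ X](scale0r (0 : L)) lmulZr scale0r. Qed.

Lemma lmulBl x1 x2 y : lmul (x1 - x2) y = lmul x1 y - lmul x2 y :> L.
Proof. by rewrite lmulDl -scaleN1r lmulZl scaleN1r. Qed.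

Lemma lmulBr x y1 y2 : lmul x (y1 - y2) = lmul x y1 - lmul x y2 :> L.
Proof. by rewrite lmulDr -scaleN1r lmulZr scaleN1r. Qed.

Lemma lmul_suml I (r : seq I) (Pr : pred I) (F : I -> L) y :
  lmul (\sum_(i <- r | Pr i) F i) y = \sum_(i <- r | Pr i) lmul (F i) y.
Proof. exact: (big_morph (fun x => lmul x y) (fun x1 x2 => lmulDl x1 x2 y) (lmul0l y)). Qed.

Lemma lmul_sumr I (r : seq I) (Pr : pred I) (F : I -> L) x :
  lmul x (\sum_(i <- r | Pr i) F i) = \sum_(i <- r | Pr i) lmul x (F i).
Proof. exact: (big_morph (fun y => lmul x y) (lmulDr x) (lmul0r x)). Qed.

Lemma pvec_ind (Q : L -> Prop) :
  Q 0 -> (forall x y, Q x -> Q y -> Q (x + y)) -> (forall a x, Q x -> Q (a *: x)) ->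
  (forall p : P, Q (evec p)) -> forall x, Q x.
Proof.
move=> Q0 QD QZ Qp x; rewrite (row_sum_delta x).
by apply: big_ind => // i _; apply: QZ; rewrite -/(bvec i) bvecE.
Qed.

Lemma lmul_bvec i j :
  lmul (bvec i) (bvec j) = \row_r (iscat (enum_val i) (enum_val j) (enum_val r))%:R.
Proof.
apply/rowP => r; rewrite !mxE (bigD1 i) //= [X in _ + X]big1 => [|i' ne]; last first.
  by apply: big1 => j' _; rewrite !mxE (negbTE ne) mul0r mul0rn.
rewrite addr0 (bigD1 j) //= [X in _ + X]big1 => [|j' ne]; last first.
  by rewrite !mxE (negbTE ne) mulr0 mul0rn.
by rewrite !mxE !eqxx mulr1 mulr1n addr0.
Qed.

Lemma lmul_bpath (p q : P) :
  lmul (evec p) (evec q) =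
  if btgt p == bsrc q then pvec (bsrc p) (bword p ++ bword q) else 0.
Proof.
rewrite !pvec_bpath lmul_bvec !enum_rankK; apply/rowP => r; rewrite !mxE /iscat.
by case: eqP; rewrite ?mxE.
Qed.

Lemma lmul_pvec v1 w1 v2 w2 :
  lmul (pvec v1 w1) (pvec v2 w2) =
  if ptgt v1 w1 == v2 then pvec v1 (w1 ++ w2) else 0.
Proof.
have [B1|nB1] := boolP (inB v1 w1); last first.
  rewrite pvec_notB // lmul0l; case: eqP => // _.
  by rewrite pvec_notB //; apply: contra nB1 => /inB_catl.
have [B2|nB2] := boolP (inB v2 w2); last first.
  rewrite (pvec_notB nB2) lmul0r; case: eqP => // e.
  by rewrite pvec_notB //; apply: contra nB2; rewrite -e => /inB_catr.
have [p [<- <-]] := inB_bpath B1; have [q [<- <-]] := inB_bpath B2.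
exact: lmul_bpath.
Qed.

Lemma lmulA (x y z : L) : lmul (lmul x y) z = lmul x (lmul y z).
Proof.
elim/pvec_ind: x y z => [y z|x1 x2 IH1 IH2 y z|a x IH y z|p].
- by rewrite !lmul0l.
- by rewrite !lmulDl IH1 IH2.
- by rewrite !lmulZl IH.
elim/pvec_ind => [z|y1 y2 IH1 IH2 z|a y IH z|q].
- by rewrite lmul0r !lmul0l lmul0r.
- by rewrite lmulDr !lmulDl lmulDr IH1 IH2.
- by rewrite lmulZr !lmulZl lmulZr IH.
elim/pvec_ind => [|z1 z2 IH1 IH2|a z IH|r].
- by rewrite !lmul0r.
- by rewrite !lmulDr IH1 IH2.
- by rewrite !lmulZr IH.
rewrite !lmul_pvec; case: (eqVneq (ptgt (bsrc p) (bword p)) (bsrc q)) => [e1|n1];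
  case: (eqVneq (ptgt (bsrc q) (bword q)) (bsrc r)) => [e2|n2];
  by rewrite ?lmul0l ?lmul0r ?lmul_pvec ?path_tgt_cat ?e1 ?e2 ?catA ?eqxx
             ?(negbTE n1) ?(negbTE n2).
Qed.

Definition idem v : L := pvec v [::].
Definition lone : L := \sum_v idem v.

Lemma lmul_idem u v : lmul (idem u) (idem v) = if u == v then idem u else 0.
Proof. exact: lmul_pvec. Qed.

Lemma lmul_idem_bpath v (p : P) :
  lmul (idem v) (evec p) = if v == bsrc p then evec p else 0.
Proof. by rewrite lmul_pvec /=; case: eqP => // ->. Qed.

Lemma lmul_bpath_idem (p : P) v :
  lmul (evec p) (idem v) = if btgt p == v then evec p else 0.
Proof. by rewrite lmul_pvec cats0. Qed.

Lemma lmul1l x : lmul lone x = x.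
Proof.
elim/pvec_ind: x => [|x y IHx IHy|a x IH|p].
- by rewrite lmul0r.
- by rewrite lmulDr IHx IHy.
- by rewrite lmulZr IH.
by rewrite lmul_suml (eq_bigr _ (fun v _ => lmul_idem_bpath v p)) -big_mkcond big_pred1_eq.
Qed.

Lemma lmul1r x : lmul x lone = x.
Proof.
elim/pvec_ind: x => [|x y IHx IHy|a x IH|p].
- by rewrite lmul0l.
- by rewrite lmulDl IHx IHy.
- by rewrite lmulZl IH.
rewrite lmul_sumr (eq_bigr _ (fun v _ => lmul_bpath_idem p v)) -big_mkcond.
by rewrite (big_pred1 (btgt p)) // => v; rewrite eq_sym.
Qed.

Lemma lmul_idem_corner_coord u w y (p : P) :
  lmul (lmul (idem u) y) (idem w) 0 (enum_rank p) =
  ((bsrc p == u) && (btgt p == w))%:R * y 0 (enum_rank p).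
Proof.
elim/pvec_ind: y => [|x y IHx IHy|a x IH|q].
- by rewrite lmul0r lmul0l !mxE mulr0.
- by rewrite lmulDr lmulDl [LHS]mxE IHx IHy [in RHS]mxE mulrDr.
- by rewrite lmulZr lmulZl [LHS]mxE IH [in RHS]mxE mulrCA.
rewrite lmul_idem_bpath bpath_coord; case: (eqVneq q p) => [->|nqp].
  rewrite mulr1 eq_sym; case: (bsrc p == u) => /=; last by rewrite lmul0l mxE.
  by rewrite lmul_bpath_idem; case: (btgt p == w); rewrite ?bpath_coord ?eqxx ?mxE.
rewrite mulr0; case: ifP => _; last by rewrite lmul0l mxE.
by rewrite lmul_bpath_idem; case: ifP => _; rewrite ?bpath_coord ?(negbTE nqp) ?mxE.
Qed.

(** * Derivations *)

Local Notation Der := (Der s t m k).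
Local Notation Inn := (Inn s t m k).
Local Notation ad := (@ad V A s t m k).

Lemma der_defect_is_linear : linear (@der_defect V A s t m k).
Proof.
move=> a D1 D2; apply/ffunP => ij; rewrite !ffunE !mulmxDr -!scalemxAr.
by rewrite !lmulDl !lmulDr !lmulZl !lmulZr subrDDD !scalerBr.
Qed.

HB.instance Definition _ := GRing.isLinear.Build k 'M[k]_N {ffun 'I_N * 'I_N -> L} *:%R
  (@der_defect V A s t m k) der_defect_is_linear.

Lemma Der_bpath D :
  (forall p q : P, lmul (evec p) (evec q) *m D =
                   lmul (evec p *m D) (evec q) + lmul (evec p) (evec q *m D)) ->
  D \in Der.
Proof.
move=> hD; rewrite /Defs.Der memv_ker lfunE /=; apply/eqP/ffunP => -[i j].
by rewrite !ffunE /= !bvecE hD -addrA -opprD subrr.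
Qed.

Lemma DerP D :
  reflect (forall x y, lmul x y *m D = lmul (x *m D) y + lmul x (y *m D)) (D \in Der).
Proof.
apply: (iffP idP) => [|hD]; last exact: Der_bpath.
rewrite /Defs.Der memv_ker lfunE /= => /eqP/ffunP hD.
have {}hD (p q : P) :
    lmul (evec p) (evec q) *m D = lmul (evec p *m D) (evec q) + lmul (evec p) (evec q *m D).
  apply/eqP; rewrite -subr_eq0 opprD addrA.
  by have := hD (enum_rank p, enum_rank q); rewrite !ffunE /= -!pvec_bpath => ->.
elim/pvec_ind => [y|x1 x2 IH1 IH2 y|a x IH y|p].
- by rewrite !lmul0l mul0mx lmul0l add0r.
- by rewrite !lmulDl !mulmxDl IH1 IH2 lmulDl addrACA.
- by rewrite !lmulZl -!scalemxAl IH lmulZl scalerDr.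
elim/pvec_ind => [|y1 y2 IH1 IH2|a y IH|q].
- by rewrite !lmul0r mul0mx lmul0r addr0.
- by rewrite !lmulDr !mulmxDl IH1 IH2 lmulDr addrACA.
- by rewrite !lmulZr -!scalemxAl IH lmulZr scalerDr.
exact: hD.
Qed.

Lemma ad_is_linear : linear ad.
Proof.
move=> a x y; apply/row_matrixP => i.
rewrite linearD linearZ /= !rowK lmulDl lmulDr lmulZl lmulZr.
by rewrite opprD addrACA scalerBr.
Qed.

HB.instance Definition _ := GRing.isLinear.Build k L 'M[k]_N *:%R ad ad_is_linear.

Lemma mul_ad (x a : L) : x *m ad a = lmul a x - lmul x a.
Proof.
rewrite mulmx_sum_row [in RHS](row_sum_delta x) lmul_sumr lmul_suml -sumrB.
by apply: eq_bigr => i _; rewrite rowK lmulZr lmulZl scalerBr.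
Qed.

Lemma InnP D : reflect (exists a, D = ad a) (D \in Inn).
Proof.
apply: (iffP memv_imgP) => [[a _ ->]|[a ->]]; exists a; rewrite ?lfunE ?memvf //.
Qed.

Lemma ad_Der a : ad a \in Der.
Proof. by apply/DerP => x y; rewrite !mul_ad lmulBl lmulBr !lmulA addrA subrK. Qed.

Lemma Inn_subv_Der : (Inn <= Der)%VS.
Proof. by apply/subvP => D /InnP[a ->]; apply: ad_Der. Qed.

Definition idem_values (D : 'M[k]_N) : {ffun V -> L} := [ffun v => idem v *m D].

Lemma idem_values_is_linear : linear idem_values.
Proof. by move=> a D1 D2; apply/ffunP => v; rewrite !ffunE mulmxDr -scalemxAr. Qed.

HB.instance Definition _ := GRing.isLinear.Build k 'M[k]_N {ffun V -> L} *:%R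
  idem_values idem_values_is_linear.

Definition Der0 : {vspace 'M[k]_N} := (Der :&: lker (linfun idem_values))%VS.

Lemma Der0P D : reflect (D \in Der /\ forall v, idem v *m D = 0) (D \in Der0).
Proof.
rewrite memv_cap; apply: (iffP andP) => -[hD h]; split=> //.
  by move=> v; move: h; rewrite memv_ker lfunE /= => /eqP/ffunP/(_ v); rewrite !ffunE.
by rewrite memv_ker lfunE /=; apply/eqP/ffunP => v; rewrite !ffunE h.
Qed.

Definition idem_twist (D : 'M[k]_N) : L := \sum_v lmul (idem v *m D) (idem v).

Section IdemTwist.
Variable D : 'M[k]_N.
Hypothesis hD : D \in Der.

Lemma lmul_idem_twist_idem w : lmul (idem_twist D) (idem w) = lmul (idem w *m D) (idem w).
Proof.
rewrite lmul_suml (eq_bigr _ (fun v _ => lmulA _ _ _)).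
under eq_bigr => v _ do rewrite lmul_idem fun_if lmul0r.
by rewrite -big_mkcond big_pred1_eq.
Qed.

Lemma lmul_idem_idem_twist w :
  lmul (idem w) (idem_twist D) = lmul (idem w *m D) (idem w) - idem w *m D.
Proof.
have Leibniz := DerP _ hD.
have e v : lmul (idem w) (lmul (idem v *m D) (idem v)) =
           (if w == v then lmul (idem w *m D) (idem w) else 0) - lmul (idem w *m D) (idem v).
  rewrite -lmulA; have -> : lmul (idem w) (idem v *m D) =
                             lmul (idem w) (idem v) *m D - lmul (idem w *m D) (idem v).
    by rewrite Leibniz addrC addKr.
  rewrite lmulBl lmulA [lmul (idem v) (idem v)]lmul_idem eqxx lmul_idem.
  by case: eqP => [<-|_]; rewrite ?mul0mx ?lmul0l.
rewrite /idem_twist lmul_sumr (eq_bigr _ (fun v _ => e v)) sumrB -big_mkcond /=.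
by rewrite (big_pred1 w) -?lmul_sumr ?lmul1r // => v; rewrite eq_sym.
Qed.

Lemma Der_subr_ad_idem_twist : D - ad (idem_twist D) \in Der0.
Proof.
apply/Der0P; split; first by rewrite memvB ?ad_Der.
move=> w; rewrite mulmxBr mul_ad lmul_idem_twist_idem lmul_idem_idem_twist.
by rewrite opprB addrAC subrr add0r subrr.
Qed.

End IdemTwist.

Lemma Der_Der0_Inn : Der = (Der0 + Inn)%VS.
Proof.
apply/eqP; rewrite eqEsubv subv_add Inn_subv_Der andbT; apply/andP; split.
  apply/subvP => D hD; rewrite -(subrK (ad (idem_twist D)) D).
  by apply: memv_add; [exact: Der_subr_ad_idem_twist | apply/InnP; exists (idem_twist D)].
by apply/subvP => D /Der0P[].
Qed.

(** * Normalized derivations and arrows *)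

Definition arrow_subst (a : A) (e : seq A) (v : V) (w : seq A) : L :=
  \sum_(0 <= j < size w | nth a w j == a) pvec v (splice e j w).

Lemma arrow_subst_cat a e v w1 w2 :
  arrow_subst a e v (w1 ++ w2) =
  \sum_(0 <= j < size w1 | nth a w1 j == a) pvec v (splice e j w1 ++ w2) +
  \sum_(0 <= j < size w2 | nth a w2 j == a) pvec v (w1 ++ splice e j w2).
Proof.
rewrite /arrow_subst size_cat (big_cat_nat (leq0n _) (leq_addr _ _)) /=; congr (_ + _).
  rewrite big_nat_cond [RHS]big_nat_cond.
  by apply: eq_big => [j|j /andP[/andP[_ hj] _]]; rewrite ?splice_catl //;
    case: ltnP => hj; rewrite ?nth_cat ?hj ?andbF.
rewrite -{1}(add0n (size w1)) big_addn addKn.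
by apply: eq_big => [j|j _]; rewrite addnC ?splice_catr // nth_cat ltnNge leq_addr /= addKn.
Qed.

Lemma arrow_subst_arrow a e v b : arrow_subst a e v [:: b] = if b == a then pvec v e else 0.
Proof. by rewrite /arrow_subst /= big_mkcond big_nat1 /splice /= cats0. Qed.

Definition arrow_der (a : A) (e : seq A) : 'M[k]_N :=
  \matrix_i arrow_subst a e (bsrc (enum_val i)) (bword (enum_val i)).

Section ArrowDerivation.
Variables (a : A) (e : seq A).
Hypotheses (e_neq_nil : e != [::]) (e_tgt : t (last a e) = t a).

Lemma path_tgt_splice v w j : (j < size w)%N -> nth a w j = a ->
  ptgt v (splice e j w) = ptgt v w.
Proof.
move=> hj hn; rewrite -[in RHS](cat_take_drop j w) (drop_nth a hj) hn -cat1s !path_tgt_cat.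
by congr ptgt; case: e e_neq_nil e_tgt => [//|b e'] _ /= <-.
Qed.

Lemma mul_arrow_der v w : ispath v w -> pvec v w *m arrow_der a e = arrow_subst a e v w.
Proof.
move=> hp; have [hB|nB] := boolP (inB v w).
  by have [p [<- <-]] := inB_bpath hB; rewrite mul_bpath rowK enum_rankK.
(* A path outside B is too long, and substitution only makes it longer. *)
rewrite pvec_notB // mul0mx /arrow_subst big_nat_cond big1 // => j /andP[/andP[_ hj] _].
apply: pvec_notB; apply: contra nB; rewrite /inB hp /= => /andP[_]; apply: leq_trans.
by rewrite -ltnS size_splice // -addn1 leq_add2l lt0n size_eq0.
Qed.

Lemma lmul_arrow_subst_l v1 w1 v2 w2 :
  lmul (arrow_subst a e v1 w1) (pvec v2 w2) =
  if ptgt v1 w1 == v2 then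
    \sum_(0 <= j < size w1 | nth a w1 j == a) pvec v1 (splice e j w1 ++ w2) else 0.
Proof.
rewrite /arrow_subst lmul_suml big_nat_cond (eq_bigr (fun j =>
   if ptgt v1 w1 == v2 then pvec v1 (splice e j w1 ++ w2) else 0)); last first.
  by move=> j /andP[/andP[_ hj] /eqP hn]; rewrite lmul_pvec path_tgt_splice.
by case: eqP => _; [rewrite [RHS]big_nat_cond | rewrite big1].
Qed.

Lemma lmul_arrow_subst_r v1 w1 v2 w2 :
  lmul (pvec v1 w1) (arrow_subst a e v2 w2) =
  if ptgt v1 w1 == v2 then
    \sum_(0 <= j < size w2 | nth a w2 j == a) pvec v1 (w1 ++ splice e j w2) else 0.
Proof.
rewrite /arrow_subst lmul_sumr (eq_bigr _ (fun j _ => lmul_pvec _ _ _ _)).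
by case: eqP => _; last rewrite big1.
Qed.

Lemma arrow_der_Der0 : arrow_der a e \in Der0.
Proof.
apply/Der0P; split=> [|v]; last by rewrite mul_arrow_der // /arrow_subst big_geq.
apply: Der_bpath => p q; rewrite lmul_bpath !mul_arrow_der ?bpath_is_path //.
rewrite lmul_arrow_subst_l lmul_arrow_subst_r.
case: eqP => [hpq|_]; last by rewrite mul0mx addr0.
rewrite mul_arrow_der ?arrow_subst_cat //.
by rewrite is_path_cat bpath_is_path -/(btgt p) hpq bpath_is_path.
Qed.

End ArrowDerivation.

Local Notation Q1B := (Q1B s t m).

Definition arrow_coords (D : 'M[k]_N) : 'rV[k]_#|Q1B| :=
  \row_j ((pvec (s (enum_val j).1) [:: (enum_val j).1] *m D) 0 (enum_rank (enum_val j).2)).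

Lemma arrow_coords_is_linear : linear arrow_coords.
Proof.
move=> c D1 D2; apply/rowP => j; rewrite !mxE mulr_sumr -big_split.
by apply: eq_bigr => i _ /=; rewrite !mxE mulrDr mulrCA.
Qed.

HB.instance Definition _ := GRing.isLinear.Build k 'M[k]_N 'rV[k]_#|Q1B| *:%R
  arrow_coords arrow_coords_is_linear.

Lemma arrow_coords_arrow_der : acyclic s t ->
  forall i, arrow_coords (arrow_der (enum_val i).1 (bword (enum_val i).2)) = delta_mx 0 i.
Proof.
move=> hacyc i; apply/rowP => j; rewrite [LHS]mxE [RHS]mxE /=.
have := Q1B_word_neq_nil hacyc (enum_valP i); have := Q1B_last_tgt (enum_valP i).
have := enum_valP i; have := enum_valP j; rewrite !inE.
case ej: (enum_val j) => [aj pj]; case ei: (enum_val i) => [ai pi] /=.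
move=> /andP[/eqP hsj _] /andP[/eqP hsi _] hlast hne.
rewrite mul_arrow_der //= ?eqxx // arrow_subst_arrow.
case: (eqVneq aj ai) => [eai|nai]; last first.
  rewrite mxE; case: (eqVneq j i) => // eji.
  by move: ej; rewrite eji ei => -[ea _]; rewrite ea eqxx in nai.
rewrite pvec_coord hsj eqxx /=; congr (nat_of_bool _)%:R.
apply/eqP/eqP => [ew|eji]; last by move: ej; rewrite eji ei => -[_ ->].
by apply: enum_val_inj; rewrite ej ei eai (bpath_inj _ ew) // hsj hsi eai.
Qed.

Section NormalizedDerivations.
Variable D : 'M[k]_N.
Hypothesis hD0 : D \in Der0.

Lemma Der0_arrow_corner a :
  pvec (s a) [:: a] *m D = lmul (lmul (idem (s a)) (pvec (s a) [:: a] *m D)) (idem (t a)).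
Proof.
have [/DerP Leibniz hE] := Der0P _ hD0.
have ha_l : lmul (idem (s a)) (pvec (s a) [:: a]) = pvec (s a) [:: a] by rewrite lmul_pvec eqxx.
have ha_r : lmul (pvec (s a) [:: a]) (idem (t a)) = pvec (s a) [:: a].
  by rewrite lmul_pvec /= eqxx.
by rewrite -{1}ha_r Leibniz hE lmul0r addr0 -{1}ha_l Leibniz hE lmul0l add0r.
Qed.

Lemma Der0_eq0 : (forall a, pvec (s a) [:: a] *m D = 0) -> D = 0.
Proof.
move=> harr; have [/DerP Leibniz hE] := Der0P _ hD0.
have hpath w : forall v, ispath v w -> pvec v w *m D = 0.
  elim: w => [v _|a w IH v]; first exact: hE.
  rewrite -cat1s is_path_cat => /andP[/andP[/eqP <- _] hp].
  have -> : pvec (s a) ([:: a] ++ w) = lmul (pvec (s a) [:: a]) (pvec (t a) w).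
    by rewrite lmul_pvec eqxx.
  by rewrite Leibniz harr lmul0l add0r IH ?lmul0r.
apply/row_matrixP => i; rewrite row0 -[i]enum_valK -mul_bpath.
exact/hpath/bpath_is_path.
Qed.

Lemma Der0_arrow_coords_eq0 : arrow_coords D = 0 -> D = 0.
Proof.
move=> hc; apply: Der0_eq0 => a; apply/rowP => r; rewrite -[r]enum_valK.
rewrite Der0_arrow_corner lmul_idem_corner_coord [RHS]mxE.
case: (boolP (_ && _)) => [hpar|]; last by rewrite mul0r.
have hx : (a, enum_val r) \in Q1B by rewrite inE.
have := congr1 (fun c : 'rV[k]_#|Q1B| => c 0 (enum_rank_in hx (a, enum_val r))) hc.
by rewrite [LHS]mxE [RHS]mxE (enum_rankK_in hx hx) /= => ->; rewrite mulr0.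
Qed.

End NormalizedDerivations.

Lemma dim_Der0 : acyclic s t -> \dim Der0 = #|Q1B|.
Proof.
move=> hacyc; have := limg_ker_dim (linfun arrow_coords) Der0.
have -> : (Der0 :&: lker (linfun arrow_coords) = 0)%VS.
  apply/eqP; rewrite -subv0; apply/subvP => D /memv_capP[hD].
  by rewrite memv_ker lfunE /= memv0 => /eqP /(Der0_arrow_coords_eq0 hD) ->.
have -> : (linfun arrow_coords @: Der0 = fullv)%VS.
  apply/eqP; rewrite eqEsubv subvf /=; apply/subvP => c _; apply/memv_imgP.
  exists (\sum_i c 0 i *: arrow_der (enum_val i).1 (bword (enum_val i).2)).
    apply: memv_suml => i _; apply: memvZ; apply: arrow_der_Der0.
      exact: Q1B_word_neq_nil (enum_valP i).
    exact: Q1B_last_tgt (enum_valP i).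
  rewrite lfunE /= linear_sum {1}(row_sum_delta c); apply: eq_bigr => i _.
  by rewrite linearZ /= arrow_coords_arrow_der.
by rewrite dimv0 add0n dimvf dim_matrix /= mul1r.
Qed.

(** * Inner normalized derivations *)

Definition diag_elt (c : 'rV[k]_#|V|) : L := \sum_v c 0 (enum_rank v) *: idem v.

Definition ad_diag (c : 'rV[k]_#|V|) : 'M[k]_N := ad (diag_elt c).

Lemma ad_diag_is_linear : linear ad_diag.
Proof.
move=> a c1 c2; rewrite /ad_diag /diag_elt -linearP /= scaler_sumr -big_split /=.
by congr ad; apply: eq_bigr => v _; rewrite !mxE scalerDl scalerA.
Qed.

HB.instance Definition _ := GRing.isLinear.Build k 'rV[k]_#|V| 'M[k]_N *:%R
  ad_diag ad_diag_is_linear.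

Lemma lmul_diag_elt_bpath c (p : P) :
  lmul (diag_elt c) (evec p) = c 0 (enum_rank (bsrc p)) *: evec p.
Proof.
rewrite lmul_suml (eq_bigr _ (fun v _ => lmulZl _ _ _)).
under eq_bigr do rewrite lmul_idem_bpath fun_if scaler0.
by rewrite -big_mkcond big_pred1_eq.
Qed.

Lemma lmul_bpath_diag_elt c (p : P) :
  lmul (evec p) (diag_elt c) = c 0 (enum_rank (btgt p)) *: evec p.
Proof.
rewrite lmul_sumr (eq_bigr _ (fun v _ => lmulZr _ _ _)).
under eq_bigr do rewrite lmul_bpath_idem fun_if scaler0.
by rewrite -big_mkcond (big_pred1 (btgt p)) // => v; rewrite eq_sym.
Qed.

Lemma ad_diag_Der0 c : ad_diag c \in Der0.
Proof.
apply/Der0P; split=> [|w]; first exact: ad_Der.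
rewrite mul_ad lmul_suml lmul_sumr -sumrB big1 // => v _.
rewrite lmulZl lmulZr -scalerBr !lmul_idem eq_sym.
by case: eqP => [->|_]; rewrite subrr scaler0.
Qed.

Lemma ad_diag_const a : ad_diag (const_mx a) = 0.
Proof.
apply/row_matrixP => i; rewrite row0 rowK -[i]enum_valK bvecE enum_rankK.
by rewrite lmul_diag_elt_bpath lmul_bpath_diag_elt !mxE subrr.
Qed.

Section InnerNormalized.
Hypotheses (hacyc : acyclic s t) (m_gt0 : (0 < m)%N).

Definition vtx_bpath v : P := sval (inB_bpath (m_gt0 : inB v [::])).

Lemma vtx_bpath_src v : bsrc (vtx_bpath v) = v.
Proof. by rewrite /vtx_bpath; case: inB_bpath => p []. Qed.

Lemma vtx_bpath_word v : bword (vtx_bpath v) = [::].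
Proof. by rewrite /vtx_bpath; case: inB_bpath => p []. Qed.

Lemma lmul_idem_corner_diag w y :
  lmul (lmul (idem w) y) (idem w) = y 0 (enum_rank (vtx_bpath w)) *: idem w.
Proof.
apply/rowP => r; rewrite -[r]enum_valK lmul_idem_corner_coord [RHS]mxE pvec_coord.
have [/andP[/eqP sw /eqP tw]|] := boolP (_ && _); last first.
  move=> hn; rewrite mul0r; case: eqP => [sw|_]; case: eqP => [ww|_]; rewrite ?andbF ?mulr0 //.
  by move: hn; rewrite /btgt sw ww eqxx.
have hw : bword (enum_val r) = [::].
  by apply: (acyclic_closed_path_nil hacyc (bpath_is_path _)); rewrite -/(btgt _) tw sw.
have -> : enum_val r = vtx_bpath w by apply: bpath_inj; rewrite ?vtx_bpath_src ?vtx_bpath_word.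
by rewrite vtx_bpath_src vtx_bpath_word !eqxx mul1r mulr1.
Qed.

Lemma Der0_cap_Inn : (Der0 :&: Inn = linfun ad_diag @: fullv)%VS.
Proof.
apply/eqP; rewrite eqEsubv; apply/andP; split; apply/subvP => D; last first.
  case/memv_imgP => c _ ->; rewrite lfunE memv_cap ad_diag_Der0.
  by apply/InnP; exists (diag_elt c).
case/memv_capP => /Der0P[_ hE] /InnP[x eD]; subst D.
have hcomm w : lmul x (idem w) = lmul (idem w) x by apply/eqP; rewrite -subr_eq0 -mul_ad hE.
apply/memv_imgP; exists (\row_j x 0 (enum_rank (vtx_bpath (enum_val j)))); rewrite ?memvf //.
rewrite lfunE /=; congr ad; rewrite -[LHS]lmul1l -[LHS]lmul1r !lmul_suml.
apply: eq_bigr => w _; rewrite lmul_sumr (bigD1 w) //= big1 ?addr0.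
  by rewrite lmul_idem_corner_diag !mxE enum_rankK.
by move=> v nvw; rewrite lmulA hcomm -lmulA lmul_idem eq_sym (negbTE nvw) lmul0l.
Qed.

End InnerNormalized.

Section InnerNormalizedDim.
Hypotheses (hV : (0 < #|V|)%N) (hconn : qconnected s t) (hacyc : acyclic s t).
Hypothesis m_gt1 : (1 < m)%N.

Lemma lker_ad_diag : (lker (linfun ad_diag) = <[const_mx 1]>)%VS.
Proof.
apply/eqP; rewrite eqEsubv; apply/andP; split; apply/subvP => c; last first.
  by case/vlineP => a ->; rewrite memv_ker lfunE /= linearZ /= ad_diag_const scaler0.
rewrite memv_ker lfunE /= => /eqP hc.
have harr a : c 0 (enum_rank (s a)) = c 0 (enum_rank (t a)).
  have [|p [ps pw]] := @inB_bpath (s a) [:: a]; first by rewrite /inB /= eqxx.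
  have /eqP := congr1 (mulmx (evec p)) hc.
  rewrite mulmx0 mul_ad lmul_diag_elt_bpath lmul_bpath_diag_elt -scalerBl scaler_eq0.
  by rewrite (negbTE (bpath_neq0 p)) orbF subr_eq0 /btgt ps pw => /eqP.
have hconst := @qconnected_const _ (fun v => c 0 (enum_rank v)) hconn harr.
apply/vlineP; exists (c 0 (Ordinal hV)); apply/rowP => j; rewrite !mxE mulr1.
by rewrite -(enum_valK j) -[Ordinal hV]enum_valK (hconst (enum_val j) (enum_val (Ordinal hV))).
Qed.

Lemma dim_Der0_cap_Inn : (\dim (Der0 :&: Inn)).+1 = #|V|.
Proof.
have h1 : const_mx 1 != 0 :> 'rV[k]_#|V|.
  by apply/eqP => /rowP/(_ (Ordinal hV)); rewrite !mxE; apply/eqP/oner_neq0.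
have := limg_ker_dim (linfun ad_diag) fullv.
rewrite capfv lker_ad_diag dim_vline h1 dimvf dim_matrix /= mul1r => <-.
by rewrite -Der0_cap_Inn ?(ltnW m_gt1) // addn1.
Qed.

End InnerNormalizedDim.

End Algebra.
End Truncation.
End QuiverPaths.

Theorem theorem6p1 (k : fieldType) (V A : finType) (s t : A -> V) (m : nat)
  (hV : (0 < #|V|)%N) (hconn : qconnected s t) (hacyc : acyclic s t)
  (hm : (2 <= m)%N) :
  HH1dim s t m k = 1 - (#|V|)%:Z + (#|Q1B s t m|)%:Z.
Proof.
have hsum := dimv_sum_cap (Der0 s t m k) (Inn s t m k).
rewrite -Der_Der0_Inn dim_Der0 // in hsum.
have hcap := dim_Der0_cap_Inn k hV hconn hacyc hm.
rewrite /HH1dim; lia.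
Qed.
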